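(* Under the hypotheses and notation of the following setting: $Q(z)=\Gamma_0^+(A-z)^{-1}\Gamma_0\in N_\kappa(H)$ with $A$ a bounded self-adjoint operator in a Pontryagin space $K$, $\Gamma_0:H\to K$ bounded, $\Gamma_0^+\Gamma_0$ boundedly invertible, $P:=\Gamma_0(\Gamma_0^+\Gamma_0)^{-1}\Gamma_0^+$, $\tilde A:=(I-P)A(I-P)$ acting in $(I-P)K$, and $\hat Q(z):=-Q(z)^{-1}$, it holds for every $z\in\rho(A)\cap\rho(\tilde A)$ that $$\hat Q(z)\Gamma_0^+=(\Gamma_0^+\Gamma_0)^{-1}\Gamma_0^+\Big\{-I+A(I-P)(\tilde A-z)^{-1}(I-P)\Big\}(A-z).$$
   Context: $H$ is a Hilbert space; $(K,[\cdot,\cdot])$ a Pontryagin space; for bounded $\Gamma_0:H\to K$, $\Gamma_0^+$ is defined by $(h,\Gamma_0^+k)=[\Gamma_0h,k]$. $N_\kappa(H)$ denotes generalized Nevanlinna functions with $\kappa$ negative squares. $(I-P)(\tilde A-z)^{-1}(I-P)$ denotes the operator on $K$ equal to $(\tilde A-z)^{-1}$ on $(I-P)K$ and $0$ on $PK$; $P$ is an orthogonal projection in $K$ with $PK=\Gamma_0(H)$ and $(I-P)K=\ker\Gamma_0^+$. *)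

From HB Require Import structures.
From mathcomp Require Import all_boot all_order all_algebra.
Set Implicit Arguments. Unset Strict Implicit. Unset Printing Implicit Defensive.
Import Order.TTheory GRing.Theory Num.Theory.
Local Open Scope ring_scope.

Section Defs.
Variable C : numClosedFieldType.

Definition sesquilinear (V : lmodType C) (f : V -> V -> C) :=
  (forall a x1 x2 y, f (a *: x1 + x2) y = a * f x1 y + f x2 y) /\
  (forall x y, f y x = (f x y)^*).

Definition inner_product (V : lmodType C) (f : V -> V -> C) :=
  sesquilinear f /\ (forall x, x != 0 -> 0 < f x x).

Definition nondegenerate (V : lmodType C) (f : V -> V -> C) :=
  forall x, (forall y, f x y = 0) -> x = 0.

(* the span of the family v is a (dim n) negative definite subspace *)
Definition neg_definite_family (V : lmodType C) (f : V -> V -> C)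
  (n : nat) (v : 'I_n -> V) :=
  forall c : 'I_n -> C, (exists i, c i != 0) ->
    f (\sum_i c i *: v i) (\sum_i c i *: v i) < 0.

Definition neg_index (V : lmodType C) (f : V -> V -> C) (kappa : nat) :=
  (exists v : 'I_kappa -> V, neg_definite_family f v) /\
  (forall n (v : 'I_n -> V), neg_definite_family f v -> (n <= kappa)%N).

(* indefinite inner product of a Pontryagin space with kappa negative squares
   (algebraic part; completeness not expressible here) *)
Definition pontryagin_form (V : lmodType C) (f : V -> V -> C) (kappa : nat) :=
  sesquilinear f /\ nondegenerate f /\ neg_index f kappa.

Definition is_adjoint (H K : lmodType C) (ipH : H -> H -> C) (ipK : K -> K -> C)
  (G : H -> K) (Gp : K -> H) :=
  forall h k, ipH h (Gp k) = ipK (G h) k.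

Definition self_adjoint (K : lmodType C) (ipK : K -> K -> C) (A : K -> K) :=
  forall x y, ipK (A x) y = ipK x (A y).

(* P := Gamma0 (Gamma0^+ Gamma0)^{-1} Gamma0^+ , Ginv = (Gamma0^+ Gamma0)^{-1} *)
Definition projP (H K : lmodType C) (G0 : H -> K) (Ginv : H -> H) (G0p : K -> H)
  : K -> K := fun k => G0 (Ginv (G0p k)).

Definition compress (K : lmodType C) (P : K -> K) (A : K -> K) : K -> K :=
  fun k => A (k - P k) - P (A (k - P k)).

(* (I-P)(Atilde - z)^{-1}(I-P), given RT = (Atilde - z)^{-1} on (I-P)K *)
Definition compressed_resolvent (K : lmodType C) (P : K -> K) (RT : K -> K)
  : K -> K := fun k => RT (k - P k) - P (RT (k - P k)).

(* Q(z) = Gamma0^+ (A - z)^{-1} Gamma0, given RA = (A - z)^{-1} *)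
Definition Qz (H K : lmodType C) (G0 : H -> K) (G0p : K -> H) (RA : K -> K)
  : H -> H := fun h => G0p (RA (G0 h)).

End Defs.

From HB Require Import structures.
From mathcomp Require Import all_boot all_order all_algebra.
Set Implicit Arguments.
Unset Strict Implicit.
Unset Printing Implicit Defensive.

Import GRing.Theory.
Local Open Scope ring_scope.

(* Write w = (A - z) k and u = (I-P)(Atilde - z)^{-1}(I-P) w.  The resolvent
   equation of the compression says (A - z) u = (I-P) w + P A u, so
   P(-w + A u) = (A - z)(u - k); applying Gamma0^+ (A - z)^{-1} and using
   Gamma0^+ u = 0 shows that Q(z) maps the right-hand side of the formula to
   -Gamma0^+ k.  Q(z) is injective because a vector of its kernel yields an
   eigenvector of Atilde in ker Gamma0^+ = (I-P)K for the eigenvalue z, so the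
   right-hand side is Qhat(z) Gamma0^+ k. *)

Section CompressedResolvent.
Variables (C : numClosedFieldType) (H K : lmodType C).
Variables (G0 : {linear H -> K}) (G0p : {linear K -> H}) (A : {linear K -> K}).
Variables (Ginv : H -> H) (z : C) (RA RT : K -> K).
Hypothesis GinvK : cancel (fun h => G0p (G0 h)) Ginv.
Hypothesis GinvVK : cancel Ginv (fun h => G0p (G0 h)).
Hypothesis RAK : cancel (fun k => A k - z *: k) RA.
Hypothesis RAVK : cancel RA (fun k => A k - z *: k).

Local Notation P := (projP G0 Ginv G0p).
Local Notation Az k := (A k%R - z *: k%R).

Hypothesis RT_resolvent : forall x, P x = 0 ->
  [/\ P (RT x) = 0, RT (compress P A x - z *: x) = x &
      compress P A (RT x) - z *: RT x = x].

Lemma GinvB : {morph Ginv : x y / x - y}.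
Proof. exact: (can2_zmod_morphism (f := G0p \o G0) GinvK GinvVK). Qed.

Lemma Ginv0 : Ginv 0 = 0.
Proof. by have := GinvB 0 0; rewrite !subrr. Qed.

Lemma RAB : {morph RA : x y / x - y}.
Proof. exact: (can2_zmod_morphism (f := A \- z \*: idfun) RAK RAVK). Qed.

Lemma RA0 : RA 0 = 0.
Proof. by have := RAB 0 0; rewrite !subrr. Qed.

Lemma projPB : {morph P : x y / x - y}.
Proof. by move=> x y; rewrite /projP linearB /= GinvB linearB. Qed.

Lemma projP0 : P 0 = 0.
Proof. by have := projPB 0 0; rewrite !subrr. Qed.

Lemma projPN x : P (- x) = - P x.
Proof. by rewrite -sub0r projPB projP0 sub0r. Qed.

Lemma projPD x y : P (x + y) = P x + P y.
Proof. by have := projPB x (- y); rewrite !opprK projPN opprK. Qed.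

Lemma G0p_projP x : G0p (P x) = G0p x.
Proof. exact: GinvVK. Qed.

Lemma projP_G0 h : P (G0 h) = G0 h.
Proof. by rewrite /projP GinvK. Qed.

Lemma projP_id x : P (P x) = P x.
Proof. by rewrite {1}/projP G0p_projP. Qed.

Lemma projP_compl x : P (x - P x) = 0.
Proof. by rewrite projPB projP_id subrr. Qed.

Lemma projP_eq0 x : P x = 0 <-> G0p x = 0.
Proof.
split=> [Px0 | G0px0]; first by rewrite -G0p_projP Px0 linear0.
by rewrite /projP G0px0 Ginv0 linear0.
Qed.

Lemma compress_ker x : P x = 0 -> compress P A x = A x - P (A x).
Proof. by move=> Px0; rewrite /compress Px0 subr0. Qed.

Lemma compressed_resolventP x :
  let u := compressed_resolvent P RT x in
  P u = 0 /\ Az u = x - P x + P (A u).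
Proof.
have [Pu _ Eu] := RT_resolvent (projP_compl x).
rewrite /compressed_resolvent Pu subr0; split=> //.
set u := RT (x - P x) in Pu Eu *.
by rewrite -Eu (compress_ker Pu) addrAC subrK.
Qed.

Lemma compress_ker_eq0 v : P v = 0 -> compress P A v = z *: v -> v = 0.
Proof.
move=> Pv0 Av; have [_ <- _] := RT_resolvent Pv0; rewrite Av subrr.
have [_ + _] := RT_resolvent projP0.
by rewrite (compress_ker projP0) linear0 projP0 scaler0 !subr0.
Qed.

Lemma QzB : {morph Qz G0 G0p RA : a b / a - b}.
Proof. by move=> a b; rewrite /Qz linearB /= RAB linearB. Qed.

Lemma Qz_eq0 h : Qz G0 G0p RA h = 0 -> h = 0.
Proof.
rewrite /Qz; set v := RA (G0 h) => /projP_eq0 Pv0.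
have Av : Az v = G0 h by exact: RAVK.
have Pzv : P (z *: v) = 0.
  by apply/projP_eq0; rewrite linearZ /= -G0p_projP Pv0 linear0 scaler0.
have v0 : v = 0.
  apply: compress_ker_eq0 => //; rewrite (compress_ker Pv0).
  rewrite -(subrK (z *: v) (A v)) projPD Pzv addr0 Av projP_G0.
  by rewrite addrAC subrr add0r.
by rewrite -[h]GinvK -Av v0 linear0 scaler0 subr0 !linear0 Ginv0.
Qed.

Lemma Qz_inj : injective (Qz G0 G0p RA).
Proof.
move=> a b Qab; apply/eqP; rewrite -subr_eq0; apply/eqP/Qz_eq0.
by rewrite QzB Qab subrr.
Qed.

Definition QhatG0p k :=
  Ginv (G0p (- Az k + A (compressed_resolvent P RT (Az k)))).

Definition Qhat h := QhatG0p (G0 (Ginv h)).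

Lemma G0_QhatG0p k :
  G0 (QhatG0p k) = Az (compressed_resolvent P RT (Az k) - k).
Proof.
have [_ Eu] := compressed_resolventP (Az k).
set u := compressed_resolvent P RT (Az k) in Eu *.
have -> : Az (u - k) = Az u - Az k := raddfB (A \- z \*: idfun) u k.
rewrite -[G0 _]/(P (- Az k + A u)) projPD projPN Eu.
by rewrite addrAC [_ - _ - Az k]addrAC subrr add0r.
Qed.

Lemma Qz_QhatG0p k : Qz G0 G0p RA (QhatG0p k) = - G0p k.
Proof.
have [/projP_eq0 G0pu _] := compressed_resolventP (Az k).
by rewrite /Qz G0_QhatG0p RAK linearB G0pu sub0r.
Qed.

Lemma Qz_Qhat h : Qz G0 G0p RA (Qhat h) = - h.
Proof. by rewrite /Qhat Qz_QhatG0p GinvVK. Qed.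

Lemma oppQhatK : cancel (fun h => - Qhat h) (Qz G0 G0p RA).
Proof.
by move=> h; rewrite -sub0r QzB Qz_Qhat /Qz linear0 RA0 linear0 sub0r opprK.
Qed.

Lemma Qz_oppQhatK : cancel (Qz G0 G0p RA) (fun h => - Qhat h).
Proof. exact: inj_can_sym oppQhatK Qz_inj. Qed.

Lemma Qhat_G0p k : Qhat (G0p k) = QhatG0p k.
Proof. by apply: Qz_inj; rewrite Qz_Qhat Qz_QhatG0p. Qed.

End CompressedResolvent.

Theorem corollary1 (C : numClosedFieldType) (H K : lmodType C)
  (ipH : H -> H -> C) (ipK : K -> K -> C) (kappa : nat)
  (G0 : {linear H -> K}) (G0p : {linear K -> H}) (A : {linear K -> K})
  (Ginv : H -> H) (z : C) (RA : K -> K) (RT : K -> K) :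
  inner_product ipH ->
  pontryagin_form ipK kappa ->
  is_adjoint ipH ipK G0 G0p ->
  self_adjoint ipK A ->
  cancel (fun h => G0p (G0 h)) Ginv -> cancel Ginv (fun h => G0p (G0 h)) ->
  cancel (fun k => A k - z *: k) RA -> cancel RA (fun k => A k - z *: k) ->
  (forall x, projP G0 Ginv G0p x = 0 ->
     [/\ projP G0 Ginv G0p (RT x) = 0,
         RT (compress (projP G0 Ginv G0p) A x - z *: x) = x &
         compress (projP G0 Ginv G0p) A (RT x) - z *: RT x = x]) ->
  exists Qinv : H -> H,
    [/\ cancel (Qz G0 G0p RA) Qinv, cancel Qinv (Qz G0 G0p RA) &
        forall k : K,
          - Qinv (G0p k) =
          Ginv (G0p (- (A k - z *: k)
                     + A (compressed_resolvent (projP G0 Ginv G0p) RT (A k - z *: k))))].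
Proof.
move=> _ _ _ _ GinvK GinvVK RAK RAVK RT_resolvent.
exists (fun h => - Qhat G0 G0p A Ginv z RT h); split.
- exact: Qz_oppQhatK.
- exact: oppQhatK.
- by move=> k; rewrite opprK; apply: Qhat_G0p.
Qed.
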